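(* Let $(\mathcal{E},\mathcal{L},\mathcal{B})$ be a weakly left resolving labelled space with associated inverse semigroup $S$, let $\xi$ be a filter in $E(S)$ of finite type with word $\alpha\in\mathcal{L}^*$, and for $0\le n\le|\alpha|$ let $\mathcal{F}_n=\{A\in\mathcal{B}:(\alpha_{1,n},A,\alpha_{1,n})\in\xi\}$. Then (i) $\mathcal{F}_n$ is a filter in $\mathcal{B}_{\alpha_{1,n}}$ for every $1\le n\le|\alpha|$, and $\mathcal{F}_0$ is either empty or a filter in $\mathcal{B}$; (ii) $\mathcal{F}_n=\{A\in\mathcal{B}_{\alpha_{1,n}}: r(A,\alpha_{n+1,m})\in\mathcal{F}_m\}$ for all $0\le n<m\le|\alpha|$.
   Context: A directed graph $\mathcal{E}=(\mathcal{E}^0,\mathcal{E}^1,r,s)$ has countable nonempty vertex set, edge set, range/source maps; paths satisfy $r(\lambda_i)=s(\lambda_{i+1})$. A labelled graph has a surjective labelling $\mathcal{L}:\mathcal{E}^1\to\mathcal{A}$ extended letterwise to paths. $\omega$ is the empty word, $\mathcal{L}^+=\bigcup_{n\ge1}\mathcal{L}(\mathcal{E}^n)$, $\mathcal{L}^*=\{\omega\}\cup\mathcal{L}^+$; $\alpha_{i,j}=\alpha_i\cdots\alpha_j$, $\alpha_{1,0}=\omega$. For $A\subseteq\mathcal{E}^0$, $\alpha\in\mathcal{L}^+$: $r(A,\alpha)=\{r(\lambda):\mathcal{L}(\lambda)=\alpha,\ s(\lambda)\in A\}$, $r(A,\omega)=A$, $r(\alpha)=r(\mathcal{E}^0,\alpha)$.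 $\mathcal{B}$ accommodating: closed under $r(\cdot,\alpha)$, finite intersections and unions, contains $r(\alpha)$ for $\alpha\in\mathcal{L}^+$; labelled space weakly left resolving if $r(A\cap B,\alpha)=r(A,\alpha)\cap r(B,\alpha)$ for $A,B\in\mathcal{B}$, $\alpha\in\mathcal{L}^+$. $\mathcal{B}_\alpha=\mathcal{B}\cap\mathcal{P}(r(\alpha))$. $S$ = triples $(\alpha,A,\beta)$, $\alpha,\beta\in\mathcal{L}^*$, $\emptyset\ne A\in\mathcal{B}_\alpha\cap\mathcal{B}_\beta$, plus $0$; product $(\alpha,A,\beta)(\gamma,B,\delta)=(\alpha\gamma',r(A,\gamma')\cap B,\delta)$ if $\gamma=\beta\gamma'$, $=(\alpha,A\cap r(B,\beta'),\delta\beta')$ if $\beta=\gamma\beta'$, $=0$ otherwise (empty middle entry identified with $0$). $E(S)=\{(\alpha,A,\alpha)\}\cup\{0\}$, $p\le q$ iff $pq=p$; $(\alpha,A,\alpha)\le(\beta,B,\beta)$ iff $\alpha=\beta\alpha'$ and $A\subseteq r(B,\alpha')$. A filter in a poset with least element $0$ is a nonempty upward-closed subset not containing $0$ in which any two elements have a common lower bound in it; filters in $\mathcal{B}_\alpha$ are under inclusion. The words of any two elements of a filter in $E(S)$ are comparable; a filter $\xi$ is of finite type if among the words $\beta$ with $(\beta,B,\beta)\in\xi$ there is one of largest length, called the word of $\xi$. *)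

(* Sets of vertices are predicates V -> Prop; set equality is
   extensional (pointwise iff). *)
From Stdlib Require Import List Arith.
Import ListNotations.

Section LabelledSpaces.
Variables (V Ed Alph : Type) (src rg : Ed -> V) (lab : Ed -> Alph).

Fixpoint is_path (l : list Ed) : Prop :=
  match l with
  | [] => True
  | e :: l' => match l' with
               | [] => True
               | e' :: _ => rg e = src e' /\ is_path l'
               end
  end.

Definition Lplus (w : list Alph) : Prop :=
  exists l, l <> [] /\ is_path l /\ map lab l = w.
Definition Lstar (w : list Alph) : Prop := w = [] \/ Lplus w.

Definition subset (A C : V -> Prop) : Prop := forall v, A v -> C v.
Definition inter (A C : V -> Prop) : V -> Prop := fun v => A v /\ C v.
Definition union (A C : V -> Prop) : V -> Prop := fun v => A v \/ C v.
Definition fullset : V -> Prop := fun _ => True.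
Definition nonemptyset (A : V -> Prop) : Prop := exists v, A v.

Definition rset (A : V -> Prop) (w : list Alph) : V -> Prop :=
  match w with
  | [] => A
  | _ :: _ => fun v => exists e l, is_path (e :: l) /\ map lab (e :: l) = w /\
                          A (src e) /\ rg (last (e :: l) e) = v
  end.

Definition rword (w : list Alph) : V -> Prop := rset fullset w.

Definition accommodating (B : (V -> Prop) -> Prop) : Prop :=
  (forall A w, B A -> Lplus w -> B (rset A w)) /\
  (forall A C, B A -> B C -> B (inter A C)) /\
  (forall A C, B A -> B C -> B (union A C)) /\
  (forall w, Lplus w -> B (rword w)).

Definition weakly_left_resolving (B : (V -> Prop) -> Prop) : Prop :=
  forall A C w, B A -> B C -> Lplus w ->
    forall v, rset (inter A C) w v <-> (rset A w v /\ rset C w v).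

Definition B_alpha (B : (V -> Prop) -> Prop) (w : list Alph) (A : V -> Prop) : Prop :=
  B A /\ subset A (rword w).

(* filter in the poset (B_alpha, ⊆) with least element the empty set *)
Definition filter_in (B : (V -> Prop) -> Prop) (w : list Alph) (F : (V -> Prop) -> Prop) : Prop :=
  (exists A, F A) /\
  (forall A, F A -> B_alpha B w A) /\
  (forall A, F A -> nonemptyset A) /\
  (forall A C, F A -> B_alpha B w C -> subset A C -> F C) /\
  (forall A C, F A -> F C -> exists D, F D /\ subset D A /\ subset D C).

(* nonzero idempotents (alpha, A, alpha) of S, encoded as pairs (alpha, A) *)
Definition idem (B : (V -> Prop) -> Prop) (w : list Alph) (A : V -> Prop) : Prop :=
  Lstar w /\ nonemptyset A /\ B_alpha B w A.

Definition idem_le (a : list Alph) (A : V -> Prop) (b : list Alph) (C : V -> Prop) : Prop :=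
  exists a', a = b ++ a' /\ subset A (rset C a').

(* a filter xi in E(S); since 0 ∉ xi, xi is a set of nonzero idempotents *)
Definition filter_ES (B : (V -> Prop) -> Prop) (xi : list Alph -> (V -> Prop) -> Prop) : Prop :=
  (exists a A, xi a A) /\
  (forall a A, xi a A -> idem B a A) /\
  (forall a A b C, xi a A -> idem B b C -> idem_le a A b C -> xi b C) /\
  (forall a A b C, xi a A -> xi b C ->
     exists d D, xi d D /\ idem_le d D a A /\ idem_le d D b C).

Definition finite_type_with_word (xi : list Alph -> (V -> Prop) -> Prop) (alpha : list Alph) : Prop :=
  (exists A, xi alpha A) /\ (forall b C, xi b C -> length b <= length alpha).

(* alpha_{i,j} = alpha_i ... alpha_j (1-based), alpha_{1,0} = omega *)
Definition subword (alpha : list Alph) (i j : nat) : list Alph :=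
  firstn (j - (i - 1)) (skipn (i - 1) alpha).

Definition Fn (B : (V -> Prop) -> Prop) (xi : list Alph -> (V -> Prop) -> Prop)
  (alpha : list Alph) (n : nat) (A : V -> Prop) : Prop :=
  B A /\ xi (subword alpha 1 n) A.

End LabelledSpaces.

Definition countable (T : Type) : Prop := exists f : T -> nat, forall x y, f x = f y -> x = y.
Definition surjective {X Y : Type} (f : X -> Y) : Prop := forall y, exists x, f x = y.

Arguments is_path {V Ed} src rg l.
Arguments Lplus {V Ed Alph} src rg lab w.
Arguments Lstar {V Ed Alph} src rg lab w.
Arguments subset {V} A C.
Arguments inter {V} A C.
Arguments union {V} A C.
Arguments fullset {V}.
Arguments nonemptyset {V} A.
Arguments rset {V Ed Alph} src rg lab A w.
Arguments rword {V Ed Alph} src rg lab w.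
Arguments accommodating {V Ed Alph} src rg lab B.
Arguments weakly_left_resolving {V Ed Alph} src rg lab B.
Arguments B_alpha {V Ed Alph} src rg lab B w A.
Arguments filter_in {V Ed Alph} src rg lab B w F.
Arguments idem {V Ed Alph} src rg lab B w A.
Arguments idem_le {V Ed Alph} src rg lab a A b C.
Arguments filter_ES {V Ed Alph} src rg lab B xi.
Arguments finite_type_with_word {V Alph} xi alpha.
Arguments subword {Alph} alpha i j.
Arguments Fn {V Alph} B xi alpha n A.

(** Up-closure of [xi] lets an idempotent [(alpha_{1,m}, A', _)]
    be pulled back to any shorter prefix, and a common lower bound with the
    idempotent at the full word [alpha] lets [(alpha_{1,n}, A, _)] be pushed
    forward to [(alpha_{1,m}, r(A, alpha_{n+1,m}), _)]; together these give (ii).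
    For (i), the sections are up-closed for the same reason, nonempty because
    [r(alpha_{1,n})] lies above the idempotent at [alpha], and directed because
    weak left resolution turns a common lower bound of [(beta, A, _)] and
    [(beta, C, _)] into one below [(beta, A ∩ C, _)]. *)
From Stdlib Require Import List Arith Lia Classical.
Import ListNotations.

Section Ranges.
Context {V Ed Alph : Type} {src rg : Ed -> V} {lab : Ed -> Alph}.

Local Notation r := (rset src rg lab).

(* [r(A, w)] computed letter by letter, which makes concatenation easy. *)
Fixpoint rset_rec (A : V -> Prop) (w : list Alph) : V -> Prop :=
  match w with
  | [] => A
  | a :: w' => fun v =>
      exists e, lab e = a /\ A (src e) /\ rset_rec (fun x => x = rg e) w' v
  end.

Lemma rset_rec_mono w : forall A C, subset A C -> subset (rset_rec A w) (rset_rec C w).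
Proof.
  induction w as [|a w IH]; intros A C HAC v; simpl; [auto|].
  intros (e & He & HA & Hv); exists e; auto.
Qed.

Lemma rset_rec_source w A v : rset_rec A w v -> exists z, A z.
Proof. destruct w; simpl; [eauto|]. intros (e & _ & HA & _); eauto. Qed.

Lemma rset_rec_exists (I : Type) (P : I -> V -> Prop) w v :
  rset_rec (fun z => exists i, P i z) w v <-> exists i, rset_rec (P i) w v.
Proof.
  split.
  - destruct w; simpl; [auto|]. intros (e & He & [i Hi] & Hv); exists i, e; auto.
  - intros [i Hv]. apply (rset_rec_mono w (P i)); [|exact Hv]. intros z Hz; eauto.
Qed.

Lemma rset_rec_app x : forall A y v,
  rset_rec A (x ++ y) v <-> rset_rec (rset_rec A x) y v.
Proof.
  induction x as [|a x IH]; intros A y v; simpl; [tauto|].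
  rewrite rset_rec_exists. split.
  - intros (e & He & HA & Hv). exists e. rewrite IH in Hv.
    apply (rset_rec_mono y (rset_rec (fun z => z = rg e) x)); [|exact Hv].
    intros z Hz; auto.
  - intros [e Hv]. destruct (rset_rec_source _ _ _ Hv) as (z & He & HA & _).
    exists e. do 2 (split; [assumption|]). rewrite IH.
    refine (rset_rec_mono y _ _ _ v Hv). intros u (_ & _ & Hu); exact Hu.
Qed.

Lemma last_cons_default (e : Ed) l d d' : last (e :: l) d = last (e :: l) d'.
Proof.
  revert e; induction l as [|e' l IH]; intros e; [reflexivity|].
  apply (IH e').
Qed.

Lemma path_rset_rec w : forall e v,
  (exists l, is_path src rg (e :: l) /\ map lab l = w /\ rg (last (e :: l) e) = v)
  <-> rset_rec (fun x => x = rg e) w v.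
Proof.
  induction w as [|a w IH]; intros e v; split.
  - intros ([|e' l] & _ & Hm & Hl); [simpl in *; auto|discriminate].
  - simpl; intros ->. exists []. simpl. auto.
  - intros ([|e' l] & Hp & Hm & Hl); [discriminate|].
    injection Hm as Ha Hm. destruct Hp as [Hr Hp].
    exists e'. split; [assumption|split; [congruence|]].
    apply IH. exists l. repeat split; auto.
    rewrite <- Hl. simpl. f_equal. apply last_cons_default.
  - intros (e' & Ha & Hs & Hv). apply IH in Hv. destruct Hv as (l & Hp & Hm & Hl).
    exists (e' :: l). repeat split; auto; simpl; [congruence|].
    rewrite <- Hl. f_equal. apply last_cons_default.
Qed.

Lemma rset_recE A w v : r A w v <-> rset_rec A w v.
Proof.
  destruct w as [|a w]; simpl; [tauto|]. split.
  - intros (e & l & Hp & Hm & HA & Hl). injection Hm as Ha Hm.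
    exists e. repeat split; auto. apply path_rset_rec. eauto.
  - intros (e & Ha & HA & Hv). apply path_rset_rec in Hv.
    destruct Hv as (l & Hp & Hm & Hl).
    exists e, l. repeat split; auto. simpl; congruence.
Qed.

Lemma rset_mono A C w : subset A C -> subset (r A w) (r C w).
Proof. intros HAC v. rewrite !rset_recE. apply rset_rec_mono, HAC. Qed.

Lemma rset_source A w v : r A w v -> exists z, A z.
Proof. rewrite rset_recE. apply rset_rec_source. Qed.

Lemma rset_app A x y v : r A (x ++ y) v <-> r (r A x) y v.
Proof.
  rewrite !rset_recE, rset_rec_app. split; apply rset_rec_mono;
    intros z; rewrite rset_recE; auto.
Qed.

Lemma rset_subset_rword A a u :
  subset A (rword src rg lab a) -> subset (r A u) (rword src rg lab (a ++ u)).
Proof.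
  intros HA v Hv. unfold rword. rewrite rset_app.
  exact (rset_mono _ _ u HA v Hv).
Qed.

Lemma Lplus_rword w : Lplus src rg lab w <-> w <> [] /\ exists v, rword src rg lab w v.
Proof.
  split.
  - intros ([|e l] & Hne & Hp & <-); [congruence|].
    split; [discriminate|]. exists (rg (last (e :: l) e)).
    exists e, l. repeat split; auto.
  - intros [Hne [v Hv]]. destruct w as [|a w]; [congruence|].
    destruct Hv as (e & l & Hp & Hm & _).
    exists (e :: l). repeat split; auto. discriminate.
Qed.

Lemma Lstar_prefix x y : Lstar src rg lab (x ++ y) -> Lstar src rg lab x.
Proof.
  destruct x as [|a x]; [left; reflexivity|]. intros [H|H]; [discriminate|right].
  apply Lplus_rword in H. destruct H as [_ [v Hv]].
  apply rset_app, rset_source in Hv. apply Lplus_rword. split; [discriminate|exact Hv].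
Qed.

Lemma Lplus_suffix x y : Lstar src rg lab (x ++ y) -> y <> [] -> Lplus src rg lab y.
Proof.
  intros [H|H] Hy.
  - destruct x, y; simpl in H; congruence.
  - apply Lplus_rword in H. destruct H as [_ [v Hv]]. apply rset_app in Hv.
    apply Lplus_rword. split; [exact Hy|]. exists v.
    exact (rset_mono _ _ y (fun _ _ => I) v Hv).
Qed.

End Ranges.

Section FilterSections.
Context {V Ed Alph : Type} {src rg : Ed -> V} {lab : Ed -> Alph}.
Variables (B : (V -> Prop) -> Prop) (xi : list Alph -> (V -> Prop) -> Prop).
Hypothesis acc : accommodating src rg lab B.
Hypothesis wlr : weakly_left_resolving src rg lab B.
Hypothesis filt : filter_ES src rg lab B xi.

Local Notation r := (rset src rg lab).
Local Notation Balpha := (B_alpha src rg lab B).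

Definition xi_section (a : list Alph) (A : V -> Prop) : Prop := B A /\ xi a A.

Lemma xi_idem a A : xi a A -> idem src rg lab B a A.
Proof. apply filt. Qed.

Lemma xi_up_prefix a b A C : xi (a ++ b) A -> Balpha a C -> subset A (r C b) -> xi a C.
Proof.
  intros HA HC HAC. destruct (xi_idem _ _ HA) as (HL & [z Hz] & _).
  apply (proj1 (proj2 (proj2 filt)) _ _ _ _ HA); [|exists b; auto].
  split; [exact (Lstar_prefix _ _ HL)|split; [|exact HC]].
  exact (rset_source _ _ _ (HAC z Hz)).
Qed.

Lemma xi_up a A C : xi a A -> Balpha a C -> subset A C -> xi a C.
Proof.
  intros HA HC HAC. apply (xi_up_prefix a [] A); [rewrite app_nil_r|..]; assumption.
Qed.

Lemma xi_inter a A C : xi a A -> xi a C -> xi a (inter A C).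
Proof.
  intros HA HC.
  destruct (proj2 (proj2 (proj2 filt)) _ _ _ _ HA HC)
    as (d & D & HD & (d1 & Hd1 & HDA) & (d2 & Hd2 & HDC)).
  rewrite Hd1 in HD, Hd2. apply app_inv_head in Hd2. subst d2.
  destruct (xi_idem _ _ HD) as (HL & _).
  destruct (xi_idem _ _ HA) as (_ & _ & HBA & HAa).
  destruct (xi_idem _ _ HC) as (_ & _ & HBC & _).
  assert (HDAC : subset D (r (inter A C) d1)).
  { destruct d1 as [|b d1]; [intros v Hv; split; [apply HDA|apply HDC]; exact Hv|].
    intros v Hv. apply wlr; auto. exact (Lplus_suffix _ _ HL ltac:(discriminate)). }
  apply (xi_up_prefix a d1 D); [exact HD| |exact HDAC].
  split; [exact (proj1 (proj2 acc) _ _ HBA HBC)|intros v [Hv _]; auto].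
Qed.

Lemma xi_section_filter a :
  (exists A, xi_section a A) -> filter_in src rg lab B a (xi_section a).
Proof.
  intros Hex. split; [exact Hex|split; [|split; [|split]]].
  - intros A [_ HA]. apply (xi_idem _ _ HA).
  - intros A [_ HA]. apply (xi_idem _ _ HA).
  - intros A C [_ HA] HC HAC. split; [apply HC|exact (xi_up _ _ _ HA HC HAC)].
  - intros A C [HBA HA] [HBC HC]. exists (inter A C).
    split; [split; [exact (proj1 (proj2 acc) _ _ HBA HBC)|exact (xi_inter _ _ _ HA HC)]|].
    split; intros v []; auto.
Qed.

Lemma xi_section_rword a b A :
  xi (a ++ b) A -> a <> [] -> xi_section a (rword src rg lab a).
Proof.
  intros HA Ha. destruct (xi_idem _ _ HA) as (HL & _ & _ & HAab).
  assert (HLa : Lplus src rg lab a).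
  { destruct (Lstar_prefix _ _ HL) as [->|H]; [contradiction|exact H]. }
  assert (HBa : B (rword src rg lab a)) by exact (proj2 (proj2 (proj2 acc)) _ HLa).
  split; [exact HBa|].
  apply (xi_up_prefix a b A); [exact HA|split; [exact HBa|intros v Hv; exact Hv]|].
  intros v Hv. apply (proj1 (rset_app _ _ _ _)), HAab, Hv.
Qed.

(* The witness [A0] at a longer word is what forces the lower bound of [A] to
   have a word extending [a ++ u]. *)
Lemma xi_push a u c A0 A :
  xi (a ++ u ++ c) A0 -> xi a A -> u <> [] -> xi (a ++ u) (r A u).
Proof.
  intros HA0 HA Hu.
  destruct (xi_idem _ _ HA0) as (HL0 & _).
  destruct (xi_idem _ _ HA) as (_ & _ & HBA & HAa).
  assert (HLu : Lplus src rg lab u).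
  { rewrite app_assoc in HL0. exact (Lplus_suffix a u (Lstar_prefix _ _ HL0) Hu). }
  destruct (proj2 (proj2 (proj2 filt)) _ _ _ _ HA0 HA)
    as (d & D & HD & (d1 & Hd1 & _) & (d2 & Hd2 & HDA)).
  rewrite Hd2, <- !app_assoc in Hd1. apply app_inv_head in Hd1. subst d2.
  rewrite Hd2, app_assoc in HD.
  apply (xi_up_prefix (a ++ u) (c ++ d1) D); [exact HD| |].
  - split; [exact (proj1 acc _ _ HBA HLu)|exact (rset_subset_rword _ _ _ HAa)].
  - intros v Hv. apply (proj1 (rset_app _ _ _ _)), HDA, Hv.
Qed.

Lemma xi_section_iff a u c A0 A :
  xi (a ++ u ++ c) A0 -> u <> [] ->
  xi_section a A <-> Balpha a A /\ xi_section (a ++ u) (r A u).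
Proof.
  intros HA0 Hu. split.
  - intros [_ HA]. pose proof (xi_push _ _ _ _ _ HA0 HA Hu) as Hpush.
    destruct (xi_idem _ _ HA) as (_ & _ & HBa).
    split; [exact HBa|split; [apply (xi_idem _ _ Hpush)|exact Hpush]].
  - intros [HBa [_ Hr]]. split; [apply HBa|].
    apply (xi_up_prefix a u (r A u)); [exact Hr|exact HBa|intros v Hv; exact Hv].
Qed.

End FilterSections.

Lemma subword_1 {Alph : Type} (alpha : list Alph) n : subword alpha 1 n = firstn n alpha.
Proof. unfold subword. simpl. rewrite Nat.sub_0_r. reflexivity. Qed.

Lemma subword_succ {Alph : Type} (alpha : list Alph) n m :
  subword alpha (n + 1) m = firstn (m - n) (skipn n alpha).
Proof. unfold subword. rewrite Nat.add_sub. reflexivity. Qed.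

Lemma firstn_split {A : Type} (l : list A) n m : n <= m ->
  firstn m l = firstn n l ++ firstn (m - n) (skipn n l).
Proof.
  intros Hnm. rewrite <- (firstn_skipn n l) at 1. rewrite firstn_app.
  destruct (Nat.le_ge_cases n (length l)) as [Hn|Hn].
  - rewrite firstn_length_le, firstn_firstn, Nat.min_r by assumption. reflexivity.
  - rewrite skipn_all2 by lia. rewrite !firstn_nil, !app_nil_r.
    rewrite !firstn_all2 by (rewrite ?length_firstn; lia). reflexivity.
Qed.

Lemma firstn_neq_nil {A : Type} (l : list A) n : 1 <= n <= length l -> firstn n l <> [].
Proof.
  intros Hn Hnil. apply (f_equal (@length A)) in Hnil.
  rewrite firstn_length_le in Hnil; simpl in Hnil; lia.
Qed.

Theorem mainTheorem11
  (V Ed Alph : Type) (src rg : Ed -> V) (lab : Ed -> Alph)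
  (B : (V -> Prop) -> Prop)
  (xi : list Alph -> (V -> Prop) -> Prop) (alpha : list Alph) :
  inhabited V -> countable V -> countable Ed -> surjective lab ->
  accommodating src rg lab B ->
  weakly_left_resolving src rg lab B ->
  filter_ES src rg lab B xi ->
  finite_type_with_word xi alpha ->
  ((forall n, 1 <= n <= length alpha ->
      filter_in src rg lab B (subword alpha 1 n) (Fn B xi alpha n)) /\
   ((forall A, ~ Fn B xi alpha 0 A) \/ filter_in src rg lab B [] (Fn B xi alpha 0))) /\
  (forall n m, n < m <= length alpha ->
     forall A, Fn B xi alpha n A <->
       (B_alpha src rg lab B (subword alpha 1 n) A /\
        Fn B xi alpha m (rset src rg lab A (subword alpha (n + 1) m)))).
Proof.
  intros _ _ _ _ acc wlr filt [[A0 HA0] _].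
  assert (HFn : forall n, Fn B xi alpha n = xi_section B xi (firstn n alpha)).
  { intros n. unfold Fn. rewrite subword_1. reflexivity. }
  assert (Halpha : forall n, xi (firstn n alpha ++ skipn n alpha) A0).
  { intros n. rewrite firstn_skipn. exact HA0. }
  split; [split|].
  - intros n Hn. rewrite subword_1, HFn.
    apply (xi_section_filter B xi acc wlr filt).
    exists (rword src rg lab (firstn n alpha)).
    exact (xi_section_rword B xi acc filt _ _ _ (Halpha n) (firstn_neq_nil _ _ Hn)).
  - destruct (classic (exists A, Fn B xi alpha 0 A)) as [Hex|Hnone].
    + right. rewrite HFn in *. exact (xi_section_filter B xi acc wlr filt _ Hex).
    + left. intros A HA. apply Hnone. eauto.
  - intros n m Hnm A. rewrite subword_1, subword_succ, !HFn, (firstn_split alpha n m) by lia.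
    apply (xi_section_iff B xi acc filt _ _ (skipn m alpha) A0).
    + rewrite app_assoc, <- firstn_split, firstn_skipn by lia. exact HA0.
    + apply firstn_neq_nil. rewrite length_skipn. lia.
Qed.
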